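(* Let $b\ge2$ be an integer and let $w$ be a fixed block of $b$-ary digits of length $p\ge1$. For every $k\ge0$, the power series $Z_w(k)$ has radius of convergence at least $(b^p-1)^{-1/p}$. Moreover, for every $k\ge0$, $$\sum_{0\le j\le k}Z_w(j)(b^{-1})\le p\,(k+1)\,b^p.$$
   Context: Strings are finite sequences over $\{0,\dots,b-1\}$, including the empty string. $k_w(X)$ is the number of possibly overlapping occurrences of $w$ in the string $X$. $N_w(k,l)$ is the number of strings $X$ of length $l$ with $k_w(X)=k$, and $Z_w(k)=\sum_{l\ge0}N_w(k,l)t^l\in\mathbb{Z}[[t]]$. *)

From Stdlib Require Import Reals Lra Lia Arith List.
From Coquelicot Require Import Coquelicot.
Import ListNotations.
Open Scope R_scope.

(* Strings over {0,...,b-1} are lists of naturals with all entries < b. *)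

Fixpoint strings (b l : nat) : list (list nat) :=
  match l with
  | O => [ [] ]
  | S l' => flat_map (fun d => map (cons d) (strings b l')) (seq 0 b)
  end.

Definition is_prefix (w X : list nat) : bool :=
  if list_eq_dec Nat.eq_dec (firstn (length w) X) w then
    Nat.leb (length w) (length X)
  else false.

(* k_w(X): number of (possibly overlapping) occurrences of w in X,
   i.e. number of positions i with X[i..i+|w|-1] = w. *)
Fixpoint occ (w X : list nat) : nat :=
  match X with
  | [] => 0
  | _ :: t => (if is_prefix w X then 1 else 0) + occ w t
  end%nat.

Definition Nw (b : nat) (w : list nat) (k l : nat) : nat :=
  length (filter (fun X => Nat.eqb (occ w X) k) (strings b l)).

(* coefficient sequence of the power series Z_w(k) = sum_l N_w(k,l) t^l *)
Definition Zw (b : nat) (w : list nat) (k : nat) : nat -> R :=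
  fun l => INR (Nw b w k l).

From Stdlib Require Import Reals List Lra Lia.
From Coquelicot Require Import Coquelicot.
Import ListNotations.
Open Scope R_scope.

(* Let A_k(l) be the number of strings of length l with fewer than k
   occurrences of w, so that A_(k+1)(l) = sum_(j<=k) N_w(j,l). Cutting a string
   of length p + l after its first p letters gives
     A_k(p + l) <= (b^p - 1) A_k(l) + A_(k-1)(l),
   because the prefix w itself already contributes one occurrence. Hence, when
   s = (b^p - 1) x^p < 1, the partial sums S_k of sum_l A_k(l) x^l satisfy
     (1 - s) S_k <= sum_(l<p) (b x)^l + x^p S_(k-1),
   so they are bounded by induction on k. This yields the radius bound, and at
   x = 1/b, where s = 1 - b^-p, it yields S_k <= p k b^p. *)

Section Counting.
Local Open Scope nat_scope.

Lemma list_sum_map_flat_map {A B : Type} (f : B -> nat) (g : A -> list B) (L : list A) :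
  list_sum (map f (flat_map g L)) = list_sum (map (fun a => list_sum (map f (g a))) L).
Proof.
  induction L as [|a L IH]; cbn; [reflexivity|].
  now rewrite map_app, list_sum_app, IH.
Qed.

Lemma length_filter_flat_map {A B : Type} (P : B -> bool) (g : A -> list B) (L : list A) :
  length (filter P (flat_map g L)) = list_sum (map (fun a => length (filter P (g a))) L).
Proof.
  induction L as [|a L IH]; cbn; [reflexivity|].
  now rewrite filter_app, length_app, IH.
Qed.

Lemma length_filter_mono {A : Type} (P Q : A -> bool) (L : list A) :
  (forall x, P x = true -> Q x = true) -> length (filter P L) <= length (filter Q L).
Proof.
  intro HPQ; induction L as [|a L IH]; cbn; [lia|].
  destruct (P a) eqn:Ha; [rewrite (HPQ a Ha); cbn; lia|].
  destruct (Q a); cbn; lia.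
Qed.

Lemma list_sum_map_le_except {A : Type} (f : A -> nat) (a : A) (L : list A) (B C : nat) :
  In a L -> (forall y, f y <= B) -> f a <= C ->
  list_sum (map f L) + B <= length L * B + C.
Proof.
  intros Ha HB HC.
  assert (Hsum : forall L', list_sum (map f L') <= length L' * B).
  { induction L' as [|y L' IH]; [cbn; lia|].
    change (f y + list_sum (map f L') <= S (length L') * B).
    rewrite Nat.mul_succ_l. specialize (HB y). lia. }
  destruct (in_split a L Ha) as (L1 & L2 & ->).
  rewrite map_app, list_sum_app, length_app.
  change (list_sum (map f L1) + (f a + list_sum (map f L2)) + B <=
          (length L1 + S (length L2)) * B + C).
  rewrite Nat.mul_add_distr_r, Nat.mul_succ_l.
  pose proof (Hsum L1); pose proof (Hsum L2). lia.
Qed.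

Lemma list_sum_repeat (c n : nat) : list_sum (repeat c n) = n * c.
Proof.
  induction n as [|n IH]; [reflexivity|].
  change (c + list_sum (repeat c n) = S n * c). rewrite IH. lia.
Qed.

Lemma length_strings (b l : nat) : length (strings b l) = b ^ l.
Proof.
  induction l as [|l IH]; cbn; [reflexivity|].
  rewrite length_flat_map, (map_ext _ (fun _ => b ^ l)) by (intro; now rewrite length_map).
  now rewrite map_const, length_seq, list_sum_repeat.
Qed.

Lemma In_strings (b : nat) (X : list nat) :
  List.Forall (fun d => d < b) X -> In X (strings b (length X)).
Proof.
  induction 1 as [|d X Hd _ IH]; cbn; [now left|].
  apply in_flat_map. exists d. split; [apply in_seq; lia | now apply in_map].
Qed.

Lemma length_filter_strings_add (b : nat) (P : list nat -> bool) (m l : nat) :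
  length (filter P (strings b (m + l))) =
  list_sum (map (fun Y => length (filter (fun X => P (Y ++ X)) (strings b l))) (strings b m)).
Proof.
  revert P; induction m as [|m IH]; intro P; cbn [strings Nat.add].
  - symmetry. apply Nat.add_0_r.
  - rewrite length_filter_flat_map, list_sum_map_flat_map.
    f_equal; apply map_ext; intro d.
    now rewrite filter_map_swap, length_map, map_map, IH.
Qed.

Lemma occ_le_app (w Y X : list nat) : occ w X <= occ w (Y ++ X).
Proof. induction Y as [|y Y IH]; cbn; [lia|]. destruct (is_prefix _ _); lia. Qed.

Lemma occ_app_self (w X : list nat) : w <> [] -> S (occ w X) <= occ w (w ++ X).
Proof.
  intro Hw; destruct w as [|a w']; [congruence|].
  assert (Hpre : is_prefix (a :: w') ((a :: w') ++ X) = true).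
  { unfold is_prefix.
    rewrite firstn_app, firstn_all, Nat.sub_diag, firstn_O, app_nil_r.
    destruct (list_eq_dec _ _ _) as [_|]; [|congruence].
    apply Nat.leb_le. rewrite length_app. lia. }
  change ((a :: w') ++ X) with (a :: (w' ++ X)) in *.
  cbn [occ]. rewrite Hpre. pose proof (occ_le_app (a :: w') w' X). lia.
Qed.

Definition count_lt (b : nat) (w : list nat) (k l : nat) : nat :=
  length (filter (fun X => occ w X <? k) (strings b l)).

Lemma count_lt_0 (b : nat) (w : list nat) (l : nat) : count_lt b w 0 l = 0.
Proof. unfold count_lt. now induction (strings b l). Qed.

Lemma count_lt_S (b : nat) (w : list nat) (k l : nat) :
  count_lt b w (S k) l = count_lt b w k l + Nw b w k l.
Proof.
  unfold count_lt, Nw.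
  induction (strings b l) as [|X L IH]; cbn [filter]; [reflexivity|].
  destruct (Nat.ltb_spec (occ w X) (S k)), (Nat.ltb_spec (occ w X) k),
    (Nat.eqb_spec (occ w X) k); cbn [length]; lia.
Qed.

Lemma count_lt_le_pow (b : nat) (w : list nat) (k l : nat) : count_lt b w k l <= b ^ l.
Proof. rewrite <- (length_strings b l). apply filter_length_le. Qed.

Lemma count_lt_add (b : nat) (w : list nat) (k l : nat) :
  w <> [] -> List.Forall (fun d => d < b) w ->
  count_lt b w k (length w + l) + count_lt b w k l <=
  b ^ length w * count_lt b w k l + count_lt b w (pred k) l.
Proof.
  intros Hw Hdig. unfold count_lt at 1.
  rewrite length_filter_strings_add, <- (length_strings b (length w)).
  apply list_sum_map_le_except with (a := w); [now apply In_strings | intro Y |];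
    apply length_filter_mono; intro X; rewrite !Nat.ltb_lt.
  - pose proof (occ_le_app w Y X). lia.
  - pose proof (occ_app_self w X Hw). lia.
Qed.

End Counting.

Lemma sum_n_lin_comb (g h : nat -> R) (s t : R) (n : nat) :
  sum_n (fun l => s * g l + t * h l) n = s * sum_n g n + t * sum_n h n.
Proof.
  induction n as [|n IH]; [now rewrite !sum_O|].
  rewrite !sum_Sn, IH. unfold plus; cbn -[sum_n]. ring.
Qed.

Lemma sum_n_le_add (g : nat -> R) (p n : nat) :
  (forall l, 0 <= g l) -> sum_n g n <= sum_n g (p + n).
Proof.
  intro Hg; induction p as [|p IH]; cbn [Nat.add]; [lra|].
  rewrite sum_Sn. unfold plus; cbn -[sum_n]. specialize (Hg (S (p + n))). lra.
Qed.

Lemma sum_n_add_split (g : nat -> R) (p n : nat) : (0 < p)%nat ->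
  sum_n g (p + n) = sum_n g (pred p) + sum_n (fun l => g (p + l)%nat) n.
Proof.
  intro Hp; destruct p as [|q]; [lia|]; cbn [pred].
  induction n as [|n IH].
  - rewrite sum_O, Nat.add_0_r, sum_Sn. reflexivity.
  - rewrite Nat.add_succ_r, !sum_Sn, IH, <- Nat.add_succ_r. unfold plus; cbn -[sum_n]. ring.
Qed.

(* The partial sums of g are dominated by those of its p-shift, which the
   recurrence bounds by C + s (sum g) + t (sum h). *)
Lemma sum_n_bound_of_shift_rec (g h : nat -> R) (p : nat) (s t C M : R) :
  (0 < p)%nat -> (forall l, 0 <= g l) -> 0 <= t -> s < 1 ->
  sum_n g (pred p) <= C ->
  (forall l, g (p + l)%nat <= s * g l + t * h l) ->
  (forall n, sum_n h n <= M) ->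
  forall n, sum_n g n <= (C + t * M) / (1 - s).
Proof.
  intros Hp Hg Ht Hs HC Hrec HM n.
  apply Rle_div_r; [lra|].
  assert (Hshift : sum_n (fun l => g (p + l)%nat) n <= s * sum_n g n + t * sum_n h n).
  { rewrite <- sum_n_lin_comb. apply sum_n_m_le, Hrec. }
  pose proof (sum_n_le_add g p n Hg) as Hmono.
  rewrite sum_n_add_split in Hmono by exact Hp.
  assert (t * sum_n h n <= t * M) by (apply Rmult_le_compat_l; auto).
  lra.
Qed.

Lemma ex_series_of_sum_n_bounded (a : nat -> R) (M : R) :
  (forall n, 0 <= a n) -> (forall n, sum_n a n <= M) -> ex_series a /\ Series a <= M.
Proof.
  intros Ha HM.
  destruct (ex_finite_lim_seq_incr (sum_n a) M) as [l Hl]; [|exact HM|].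
  { intro n. rewrite sum_Sn. unfold plus; cbn -[sum_n]. specialize (Ha (S n)). lra. }
  assert (Hser : is_series a l) by exact Hl.
  split; [now exists l|].
  rewrite (is_series_unique a l Hser).
  apply (is_lim_seq_le (sum_n a) (fun _ => M) l M); [exact HM | exact Hl | apply is_lim_seq_const].
Qed.

Lemma Rbar_le_of_forall_lt (y : R) (r : Rbar) :
  (forall x : R, x < y -> Rbar_le x r) -> Rbar_le y r.
Proof.
  intro H; destruct r as [r| |]; cbn; [|exact I|].
  - destruct (Rle_or_lt y r) as [|Hr]; [assumption|].
    exfalso. specialize (H ((r + y) / 2)). cbn in H. lra.
  - apply (H (y - 1)). lra.
Qed.

Lemma mul_pow_lt_1_of_lt_Rpower (B x : R) (p : nat) :
  0 < B -> (0 < p)%nat -> 0 < x < Rpower B (- / INR p) -> B * x ^ p < 1.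
Proof.
  intros HB Hp Hx.
  assert (HpR : 0 < INR p) by now apply lt_0_INR.
  assert (Hlt : Rpower x (INR p) < Rpower (Rpower B (- / INR p)) (INR p))
    by now apply Rlt_Rpower_l.
  rewrite Rpower_pow, Rpower_mult in Hlt by lra.
  replace (- / INR p * INR p) with (- (1)) in Hlt by (field; lra).
  rewrite Rpower_Ropp, Rpower_1 in Hlt by exact HB.
  apply Rmult_lt_compat_l with (r := B) in Hlt; [|exact HB].
  rewrite Rinv_r in Hlt by lra. exact Hlt.
Qed.

Lemma Nw_le_count_lt (b : nat) (w : list nat) (k l : nat) :
  (Nw b w k l <= count_lt b w (S k) l)%nat.
Proof. rewrite count_lt_S. lia. Qed.

Lemma sum_Zw_count_lt (b : nat) (w : list nat) (k l : nat) :
  sum_f_R0 (fun j => Zw b w j l) k = INR (count_lt b w (S k) l).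
Proof.
  unfold Zw; induction k as [|k IH]; cbn [sum_f_R0].
  - now rewrite count_lt_S, count_lt_0.
  - now rewrite IH, (count_lt_S b w (S k)), plus_INR.
Qed.

Lemma sub1_mul_inv_pow_lt_1 (b p : nat) :
  (0 < b)%nat -> (INR b ^ p - 1) * (/ INR b) ^ p < 1.
Proof.
  intro Hb.
  assert (Hbp : 0 < INR b ^ p) by (apply pow_lt, lt_0_INR, Hb).
  rewrite pow_inv, Rmult_minus_distr_r, Rinv_r, Rmult_1_l by lra.
  pose proof (Rinv_0_lt_compat _ Hbp). lra.
Qed.

Section CountSeries.

Variables (b : nat) (w : list nat) (x : R).
Hypothesis Hw : w <> [].
Hypothesis Hdig : List.Forall (fun d => (d < b)%nat) w.
Hypothesis Hx : 0 <= x.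
Hypothesis Hcontr : (INR b ^ length w - 1) * x ^ length w < 1.

Lemma count_lt_term_nonneg (k l : nat) : 0 <= INR (count_lt b w k l) * x ^ l.
Proof. apply Rmult_le_pos; [apply pos_INR | now apply pow_le]. Qed.

Lemma sum_n_count_lt_0 (n : nat) : sum_n (fun l => INR (count_lt b w 0 l) * x ^ l) n = 0.
Proof.
  rewrite (sum_n_ext _ (fun _ => 0)), sum_n_const by (intro; now rewrite count_lt_0, Rmult_0_l).
  apply Rmult_0_r.
Qed.

Lemma sum_n_count_lt_step (k : nat) (M : R) :
  (forall n, sum_n (fun l => INR (count_lt b w k l) * x ^ l) n <= M) ->
  forall n, sum_n (fun l => INR (count_lt b w (S k) l) * x ^ l) n <=
    (sum_n (fun l => (INR b * x) ^ l) (pred (length w)) + x ^ length w * M) /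
    (1 - (INR b ^ length w - 1) * x ^ length w).
Proof.
  intro HM.
  apply sum_n_bound_of_shift_rec
    with (p := length w) (h := fun l => INR (count_lt b w k l) * x ^ l);
    [| exact (count_lt_term_nonneg (S k)) | now apply pow_le | exact Hcontr | | | exact HM].
  - destruct w; [congruence | cbn; lia].
  - apply sum_n_m_le; intro l.
    rewrite Rpow_mult_distr, <- pow_INR.
    apply Rmult_le_compat_r; [now apply pow_le | apply le_INR, count_lt_le_pow].
  - intro l.
    pose proof (le_INR _ _ (count_lt_add b w (S k) l Hw Hdig)) as Hrec.
    rewrite !plus_INR, mult_INR, pow_INR in Hrec. cbn [pred] in Hrec.
    rewrite pow_add.
    assert (0 <= x ^ length w * x ^ l) by (apply Rmult_le_pos; now apply pow_le).
    nra.
Qed.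

Lemma sum_n_count_lt_bounded (k : nat) :
  exists M, forall n, sum_n (fun l => INR (count_lt b w k l) * x ^ l) n <= M.
Proof.
  induction k as [|k [M HM]].
  - exists 0. intro n. rewrite sum_n_count_lt_0. apply Rle_refl.
  - eexists. exact (sum_n_count_lt_step k M HM).
Qed.

Lemma ex_series_count_lt_pow (k : nat) :
  ex_series (fun l => INR (count_lt b w k l) * x ^ l).
Proof.
  destruct (sum_n_count_lt_bounded k) as [M HM].
  exact (proj1 (ex_series_of_sum_n_bounded _ M (count_lt_term_nonneg k) HM)).
Qed.

Lemma Zw_term_le_count_lt (k l : nat) :
  0 <= Zw b w k l * x ^ l <= INR (count_lt b w (S k) l) * x ^ l.
Proof.
  split; [apply Rmult_le_pos; [apply pos_INR | now apply pow_le]|].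
  apply Rmult_le_compat_r; [now apply pow_le | apply le_INR, Nw_le_count_lt].
Qed.

Lemma ex_series_Zw_pow (k : nat) : ex_series (fun l => Zw b w k l * x ^ l).
Proof.
  apply (@ex_series_le R_AbsRing R_CompleteNormedModule _
           (fun l => INR (count_lt b w (S k) l) * x ^ l)).
  - intro l. destruct (Zw_term_le_count_lt k l).
    unfold norm; cbn. rewrite Rabs_pos_eq; assumption.
  - apply ex_series_count_lt_pow.
Qed.

Lemma CV_radius_Zw_ge (k : nat) : Rbar_le x (CV_radius (Zw b w k)).
Proof.
  apply (Lub_Rbar_correct (CV_disk (Zw b w k))). unfold CV_disk.
  apply (ex_series_ext (fun l => Zw b w k l * x ^ l)); [|apply ex_series_Zw_pow].
  intro l. destruct (Zw_term_le_count_lt k l). symmetry. now apply Rabs_pos_eq.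
Qed.

Lemma sum_PSeries_Zw (k : nat) :
  sum_f_R0 (fun j => PSeries (Zw b w j) x) k =
  Series (fun l => INR (count_lt b w (S k) l) * x ^ l).
Proof.
  unfold PSeries; induction k as [|k IH]; cbn [sum_f_R0].
  - apply Series_ext. intro l. now rewrite <- sum_Zw_count_lt.
  - rewrite IH, <- Series_plus by (apply ex_series_count_lt_pow || apply ex_series_Zw_pow).
    apply Series_ext. intro l.
    rewrite <- !sum_Zw_count_lt. cbn [sum_f_R0]. ring.
Qed.

End CountSeries.

Lemma sum_n_count_lt_at_inv_base (b : nat) (w : list nat) (k n : nat) :
  (0 < b)%nat -> w <> [] -> List.Forall (fun d => (d < b)%nat) w ->
  sum_n (fun l => INR (count_lt b w k l) * (/ INR b) ^ l) n <=
  INR (length w) * INR k * INR b ^ length w.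
Proof.
  intros Hb Hw Hdig.
  assert (HbR : 0 < INR b) by now apply lt_0_INR.
  assert (Hbp : 0 < INR b ^ length w) by now apply pow_lt.
  assert (Hinit : sum_n (fun l => (INR b * / INR b) ^ l) (pred (length w)) = INR (length w)).
  { rewrite Rinv_r by lra.
    rewrite (sum_n_ext _ (fun _ => 1)), sum_n_const by (intro; apply pow1).
    destruct w; [congruence|]. apply Rmult_1_r. }
  revert n; induction k as [|k IH]; intro n.
  - rewrite sum_n_count_lt_0. cbn [INR]. lra.
  - eapply Rle_trans.
    { apply (sum_n_count_lt_step b w (/ INR b) Hw Hdig); [| | exact IH].
      - now apply Rlt_le, Rinv_0_lt_compat.
      - now apply sub1_mul_inv_pow_lt_1. }
    rewrite Hinit, pow_inv, S_INR. right. field. lra.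
Qed.

Theorem lemma1 (b p : nat) (w : list nat)
  (Hb : (2 <= b)%nat) (Hp : (1 <= p)%nat) (Hlen : length w = p)
  (Hdig : List.Forall (fun d => (d < b)%nat) w) :
  (forall k : nat,
     Rbar_le (Finite (Rpower (INR b ^ p - 1) (- / INR p))) (CV_radius (Zw b w k)))
  /\
  (forall k : nat,
     sum_f_R0 (fun j => PSeries (Zw b w j) (/ INR b)) k
       <= INR p * INR (k + 1) * INR b ^ p).
Proof.
  assert (Hw : w <> []) by (intros ->; cbn in Hlen; lia).
  assert (Hb0 : (0 < b)%nat) by lia.
  assert (Hinv : 0 < / INR b) by now apply Rinv_0_lt_compat, lt_0_INR.
  subst p. split; intro k.
  - apply Rbar_le_of_forall_lt. intros x Hx.
    destruct (Rle_or_lt x 0) as [Hx0|Hx0].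
    + apply (Rbar_le_trans _ (Finite 0)); [exact Hx0 | apply CV_radius_ge_0].
    + apply CV_radius_Zw_ge; [assumption | assumption | lra |].
      apply mul_pow_lt_1_of_lt_Rpower; [| lia | lra].
      assert (HbR : 2 <= INR b) by (apply (le_INR 2); lia).
      assert (INR b ^ 1 <= INR b ^ length w) by (apply Rle_pow; [lra | lia]).
      rewrite pow_1 in *. lra.
  - rewrite sum_PSeries_Zw, Nat.add_1_r by (assumption || lra || now apply sub1_mul_inv_pow_lt_1).
    refine (proj2 (ex_series_of_sum_n_bounded _ _ _ _)).
    + intro l. apply count_lt_term_nonneg. lra.
    + intro n. now apply sum_n_count_lt_at_inv_base.
Qed.
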